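(* Let $\lambda_1,\lambda_2$ and $H$ be as in the context. For every $c>0$ there exists a unique $\widetilde{\theta_c}\in(0,\frac{\pi}{2})\cap(0,\theta_c^+)$ such that $H(c,\widetilde{\theta_c})=0$.
   Context: Either $\lambda_1>\lambda_2>0$ or $\lambda_1=\lambda_2=1$. For $c>0$ put $\theta_c^+=\pi$ if $c>\sqrt2\lambda_1$ and $\theta_c^+=\arccos(1-c^2/\lambda_1^2)$ if $0<c\le\sqrt2\lambda_1$; $\Omega=\{(c,\theta): c>0,\ |\theta|<\theta_c^+\}$. For $(c,\theta)\in\Omega$: $D=\sin\theta/c$; $\varphi$ is the global solution of $\varphi'(u)=\sqrt{c^2+2\cos\theta\,B(u)-D^2B(u)^2}$, $\varphi(0)=0$, where $B(u)=\lambda_1^2\cos^2\varphi(u)+\lambda_2^2\sin^2\varphi(u)$; $U>0$ is the unique number with $\varphi(U)=\pi$; $f$ solves $f'(u)=DB(u)$, $f(0)=0$; $G(u)=\int_0^u\frac{c-\varphi'(s)}{B(s)}ds$; and $H(c,\theta)=Df(U)+cG(U)$. *)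

From Stdlib Require Import Reals ClassicalEpsilon.
From Coquelicot Require Import Coquelicot.
Open Scope R_scope.

Definition theta_plus (l1 c : R) : R :=
  if Rlt_dec (sqrt 2 * l1) c then PI else acos (1 - c ^ 2 / l1 ^ 2).

Definition in_Omega (l1 c th : R) : Prop := 0 < c /\ Rabs th < theta_plus l1 c.

Definition Dc (c th : R) : R := sin th / c.

(* B as a function of the angle: B(u) = Bang (phi u) *)
Definition Bang (l1 l2 x : R) : R := l1 ^ 2 * (cos x) ^ 2 + l2 ^ 2 * (sin x) ^ 2.

Definition phi_rhs (l1 l2 c th x : R) : R :=
  sqrt (c ^ 2 + 2 * cos th * Bang l1 l2 x - (Dc c th) ^ 2 * (Bang l1 l2 x) ^ 2).

Definition is_phi (l1 l2 c th : R) (phi : R -> R) : Prop :=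
  phi 0 = 0 /\ forall u, is_derive phi u (phi_rhs l1 l2 c th (phi u)).

(* "the" global solution (chosen by description; it is unique in Omega) *)
Definition phi (l1 l2 c th : R) : R -> R :=
  epsilon (inhabits (fun _ => 0)) (is_phi l1 l2 c th).

Definition Bfun (l1 l2 c th : R) (u : R) : R := Bang l1 l2 (phi l1 l2 c th u).

Definition phi' (l1 l2 c th : R) (u : R) : R := phi_rhs l1 l2 c th (phi l1 l2 c th u).

Definition Ucap (l1 l2 c th : R) : R :=
  epsilon (inhabits 0) (fun U => 0 < U /\ phi l1 l2 c th U = PI).

(* f solves f' = D B, f(0) = 0, i.e. f(u) = int_0^u D B(s) ds *)
Definition ffun (l1 l2 c th : R) (u : R) : R :=
  RInt (fun s => Dc c th * Bfun l1 l2 c th s) 0 u.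

Definition Gfun (l1 l2 c th : R) (u : R) : R :=
  RInt (fun s => (c - phi' l1 l2 c th s) / Bfun l1 l2 c th s) 0 u.

Definition Hfun (l1 l2 c th : R) : R :=
  Dc c th * ffun l1 l2 c th (Ucap l1 l2 c th) + c * Gfun l1 l2 c th (Ucap l1 l2 c th).

From Stdlib Require Import Reals Lra Psatz ClassicalEpsilon.
From Coquelicot Require Import Coquelicot.
Open Scope R_scope.

(* Let T be the inverse of phi: T(x) = int_0^x dy / r(y), where r is the right-hand side
   of the ODE for phi.  Then U = T(pi), and the substitution u = T(x) turns H(c, theta)
   into [H_reduced (cos theta) = int_0^pi H_density c (cos theta) (B(x)) dx] with an explicit
   integrand.  For k = cos theta the constraint theta in (0, pi/2) /\ (0, theta_c^+) reads
   0 < k < 1, (1 - k) l1^2 < c^2.  On that interval H_density is strictly decreasing and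
   locally Lipschitz in k, so H_reduced is continuous and strictly decreasing; it is
   nonpositive near k = 1 and nonnegative near the lower end of the interval (for c <= l1
   because the radicand vanishes at x = 0 there, which makes the integral diverge like a
   logarithm), hence it has exactly one zero. *)

Lemma sin_sq_add_cos_sq x : sin x ^ 2 + cos x ^ 2 = 1.
Proof. rewrite <- (sin2_cos2 x). unfold Rsqr. ring. Qed.

Lemma continuous_of_ex_derive (f : R -> R) x : ex_derive f x -> continuous f x.
Proof. apply (@ex_derive_continuous R_AbsRing R_NormedModule). Qed.

Lemma Rdiv_le_compat a b a' b' : 0 <= a -> a <= a' -> 0 < b' -> b' <= b -> a / b <= a' / b'.
Proof.
  intros. unfold Rdiv. apply Rmult_le_compat; try lra.
  - apply Rlt_le, Rinv_0_lt_compat; lra.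
  - apply Rinv_le_contravar; lra.
Qed.

Lemma Rdiv_le_0_compat a b : 0 <= a -> 0 < b -> 0 <= a / b.
Proof. intros. apply Rmult_le_pos; [lra | apply Rlt_le, Rinv_0_lt_compat; lra]. Qed.

Lemma sqrt_le_of_sq_le x y : 0 <= y -> y ^ 2 <= x -> y <= sqrt x.
Proof. intros. rewrite <- (sqrt_pow2 y) by lra. apply sqrt_le_1_alt. lra. Qed.

Lemma sqrt_ge_of_le_sq x y : 0 <= y -> x <= y ^ 2 -> sqrt x <= y.
Proof. intros. rewrite <- (sqrt_pow2 y) by lra. apply sqrt_le_1_alt. lra. Qed.

Lemma RInt_const_R (a b v : R) : RInt (fun _ => v) a b = (b - a) * v.
Proof. rewrite RInt_const. reflexivity. Qed.

Lemma ex_RInt_of_continuous (f : R -> R) a b :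
  (forall x, continuous f x) -> ex_RInt f a b.
Proof. intros Hf. apply (@ex_RInt_continuous R_CompleteNormedModule). intros; apply Hf. Qed.

Lemma continuity_pt_of_lipschitz (f : R -> R) x0 d L : 0 < d ->
  (forall x, Rabs (x - x0) < d -> Rabs (f x - f x0) <= L * Rabs (x - x0)) ->
  continuity_pt f x0.
Proof.
  intros Hd Hf eps Heps.
  set (L' := Rabs L + 1).
  exists (Rmin d (eps / L')). split.
  { apply Rmin_pos; [lra | apply Rdiv_lt_0_compat; unfold L'; pose proof (Rabs_pos L); lra]. }
  intros x [_ Hx]. simpl in *. unfold R_dist in *.
  assert (Hxd : Rabs (x - x0) < d) by (eapply Rlt_le_trans; [apply Hx | apply Rmin_l]).
  assert (Hxe : Rabs (x - x0) < eps / L') by (eapply Rlt_le_trans; [apply Hx | apply Rmin_r]).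
  assert (HL' : 0 < L') by (unfold L'; pose proof (Rabs_pos L); lra).
  apply (Rmult_lt_compat_l L') in Hxe; [|lra].
  replace (L' * (eps / L')) with eps in Hxe by (field; lra).
  pose proof (Hf x Hxd). pose proof (Rabs_pos (x - x0)). pose proof (Rle_abs L).
  assert (L * Rabs (x - x0) <= L' * Rabs (x - x0)) by (apply Rmult_le_compat_r; unfold L'; lra).
  lra.
Qed.

Lemma IVT_interv_nonneg_nonpos (f : R -> R) a b : a <= b ->
  (forall x, a <= x <= b -> continuity_pt f x) -> 0 <= f a -> f b <= 0 ->
  exists z, a <= z <= b /\ f z = 0.
Proof.
  intros Hab Hf Ha Hb.
  destruct (Req_dec (f a) 0) as [Ea|Ea]; [exists a; split; [lra | exact Ea]|].
  destruct (Req_dec (f b) 0) as [Eb|Eb]; [exists b; split; [lra | exact Eb]|].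
  destruct (Ranalysis5.IVT_interv (fun x => - f x) a b) as [z [Hz Ez]].
  - intros x Hx. apply continuity_pt_opp, Hf, Hx.
  - destruct Hab as [|E]; [assumption | subst; lra].
  - lra.
  - lra.
  - exists z. split; [exact Hz | lra].
Qed.

Lemma RInt_lin_comb (f g : R -> R) a b u v : ex_RInt f a b -> ex_RInt g a b ->
  u * RInt f a b + v * RInt g a b = RInt (fun x => u * f x + v * g x) a b.
Proof.
  intros Hf Hg. symmetry. apply is_RInt_unique.
  apply (is_RInt_plus (V := R_NormedModule) (fun x => u * f x) (fun x => v * g x));
    apply (is_RInt_scal (V := R_NormedModule)); apply (RInt_correct (V := R_CompleteNormedModule)); auto.
Qed.

Lemma RInt_le_0 (f : R -> R) a b : a <= b -> ex_RInt f a b ->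
  (forall x, a < x < b -> f x <= 0) -> RInt f a b <= 0.
Proof.
  intros Hab Hf H. eapply Rle_trans.
  - apply (RInt_le f (fun _ => 0)); auto using ex_RInt_const.
  - rewrite RInt_const_R. lra.
Qed.

Lemma sin_sq_le_sq x : 0 <= x <= PI -> sin x ^ 2 <= x ^ 2.
Proof.
  intros Hx. pose proof (sin_ge_0 x ltac:(lra) ltac:(lra)).
  destruct (Req_dec x 0) as [->|]; [rewrite sin_0; lra|].
  pose proof (sin_lt_x x ltac:(lra)). nra.
Qed.

Lemma RInt_hyperbola C D a : 0 < a ->
  RInt (fun x => C / (a + x) - D) 0 PI = C * (ln (a + PI) - ln a) - D * PI.
Proof.
  intros Ha. pose proof PI_RGT_0.
  apply is_RInt_unique.
  replace (C * (ln (a + PI) - ln a) - D * PI)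
    with ((C * ln (a + PI) - D * PI) - (C * ln (a + 0) - D * 0)) by (rewrite Rplus_0_r; ring).
  apply (is_RInt_derive (fun x => C * ln (a + x) - D * x)); rewrite Rmin_left, Rmax_right by lra.
  - intros x Hx. auto_derive; [lra | field; lra].
  - intros x Hx. apply continuous_of_ex_derive. auto_derive. lra.
Qed.

Lemma RInt_hyperbola_nonneg C D b : 0 < C -> 0 < b ->
  exists a, 0 < a <= b /\ 0 <= RInt (fun x => C / (a + x) - D) 0 PI.
Proof.
  intros HC Hb. pose proof PI_RGT_0.
  set (N := PI * D / C).
  set (a := Rmin b (PI / exp N)).
  assert (Ha : 0 < a) by (apply Rmin_pos; [lra | apply Rdiv_lt_0_compat; [lra | apply exp_pos]]).
  assert (Ha2 : a * exp N <= PI).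
  { pose proof (Rmin_r b (PI / exp N)) as Hr. fold a in Hr.
    apply (Rmult_le_compat_r (exp N)) in Hr; [|apply Rlt_le, exp_pos].
    replace (PI / exp N * exp N) with PI in Hr by (field; apply Rgt_not_eq, exp_pos). exact Hr. }
  exists a. split; [split; [exact Ha | apply Rmin_l]|].
  rewrite RInt_hyperbola by lra.
  assert (ln a + N <= ln (a + PI)).
  { rewrite <- (ln_exp N) at 1. rewrite <- ln_mult by (auto; apply exp_pos).
    apply ln_le; [apply Rmult_lt_0_compat; [lra | apply exp_pos] | lra]. }
  assert (C * N = PI * D) by (unfold N; field; lra).
  assert (C * N <= C * (ln (a + PI) - ln a)) by (apply Rmult_le_compat_l; lra).
  lra.
Qed.

Section Autonomous_ODE.

Variables (r : R -> R) (rmax : R).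
Hypothesis r_cont : forall x, continuous r x.
Hypothesis r_pos : forall x, 0 < r x.
Hypothesis r_le : forall x, r x <= rmax.

Let rmax_pos : 0 < rmax.
Proof. pose proof (r_pos 0); pose proof (r_le 0); lra. Qed.

Definition ode_time x := RInt (fun y => / r y) 0 x.

Lemma continuous_inv_r x : continuous (fun y => / r y) x.
Proof.
  apply continuity_pt_filterlim, continuity_pt_inv.
  - apply continuity_pt_filterlim, r_cont.
  - apply Rgt_not_eq, r_pos.
Qed.

Let ex_RInt_inv_r a b : ex_RInt (fun y => / r y) a b.
Proof. apply ex_RInt_of_continuous, continuous_inv_r. Qed.

Lemma is_derive_ode_time x : is_derive ode_time x (/ r x).
Proof.
  apply (is_derive_RInt (fun y => / r y) ode_time 0 x).
  - apply filter_forall. intros b. apply (@RInt_correct R_CompleteNormedModule), ex_RInt_inv_r.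
  - apply continuous_inv_r.
Qed.

Lemma ode_time_0 : ode_time 0 = 0.
Proof. unfold ode_time. rewrite RInt_point. reflexivity. Qed.

Lemma ode_time_growth x y : x <= y -> (y - x) / rmax <= ode_time y - ode_time x.
Proof.
  intros Hxy. unfold ode_time. rewrite <- (RInt_Chasles (fun y => / r y) 0 x y) by apply ex_RInt_inv_r.
  change (plus ?a ?b) with (a + b).
  replace ((y - x) / rmax) with (RInt (fun _ => / rmax) x y) by (rewrite RInt_const_R; reflexivity).
  enough (RInt (fun _ => / rmax) x y <= RInt (fun y => / r y) x y) by lra.
  apply RInt_le; auto using ex_RInt_const.
  intros z _. apply Rinv_le_contravar; auto.
Qed.

Lemma ode_time_lt x y : x < y -> ode_time x < ode_time y.
Proof.
  intros Hxy. pose proof (ode_time_growth x y (Rlt_le _ _ Hxy)).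
  assert (0 < (y - x) / rmax) by (apply Rdiv_lt_0_compat; lra). lra.
Qed.

Lemma ode_time_inj x y : ode_time x = ode_time y -> x = y.
Proof.
  intros E. destruct (Rtotal_order x y) as [H|[H|H]]; auto.
  - pose proof (ode_time_lt x y H); lra.
  - pose proof (ode_time_lt y x H); lra.
Qed.

(* [ode_time] grows at least linearly in both directions, hence is onto. *)
Lemma ode_time_surj u : exists x, ode_time x = u.
Proof.
  pose proof rmax_pos as rp.
  set (a := - rmax * Rabs u). set (b := rmax * Rabs u).
  pose proof (Rabs_pos u). pose proof (Rle_abs u). pose proof (Rabs_maj2 u).
  pose proof (ode_time_growth a 0 ltac:(unfold a; nra)) as Ha.
  pose proof (ode_time_growth 0 b ltac:(unfold b; nra)) as Hb.
  rewrite ode_time_0 in Ha, Hb.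
  replace ((0 - a) / rmax) with (Rabs u) in Ha by (unfold a; field; lra).
  replace ((b - 0) / rmax) with (Rabs u) in Hb by (unfold b; field; lra).
  assert (Hc : continuity ode_time).
  { intros x. apply continuity_pt_filterlim, continuous_of_ex_derive.
    eexists; apply is_derive_ode_time. }
  destruct (IVT_gen ode_time a b u Hc) as [x [_ Hx]]; [|now exists x].
  split; [eapply Rle_trans; [apply Rmin_l|] | eapply Rle_trans; [|apply Rmax_r]]; lra.
Qed.

Definition ode_flow u := epsilon (inhabits 0) (fun x => ode_time x = u).

Lemma ode_time_flow u : ode_time (ode_flow u) = u.
Proof. apply (epsilon_spec (inhabits 0) (fun x => ode_time x = u)), ode_time_surj. Qed.

Lemma ode_flow_time x : ode_flow (ode_time x) = x.
Proof. apply ode_time_inj, ode_time_flow. Qed.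

Lemma ode_flow_lipschitz u v : u <= v ->
  0 <= ode_flow v - ode_flow u <= rmax * (v - u).
Proof.
  intros Huv. pose proof rmax_pos.
  pose proof (ode_time_flow u) as Eu. pose proof (ode_time_flow v) as Ev.
  set (x := ode_flow u) in *. set (y := ode_flow v) in *.
  assert (Hxy : x <= y).
  { destruct (Rle_lt_dec x y) as [|Hyx]; auto. pose proof (ode_time_lt y x Hyx). lra. }
  pose proof (ode_time_growth x y Hxy) as G. rewrite Eu, Ev in G.
  apply (Rmult_le_compat_r rmax) in G; [|lra].
  replace ((y - x) / rmax * rmax) with (y - x) in G by (field; lra). lra.
Qed.

Lemma continuity_pt_ode_flow u : continuity_pt ode_flow u.
Proof.
  pose proof rmax_pos. intros eps Heps. exists (eps / rmax). split; [apply Rdiv_lt_0_compat; lra|].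
  intros v [_ Hv]. simpl in Hv |- *. unfold R_dist in *.
  apply (Rmult_lt_compat_l rmax) in Hv; auto.
  replace (rmax * (eps / rmax)) with eps in Hv by (field; lra).
  destruct (Rle_lt_dec u v) as [Huv|Hvu].
  - pose proof (ode_flow_lipschitz u v Huv).
    rewrite Rabs_right in Hv |- * by lra. lra.
  - pose proof (ode_flow_lipschitz v u (Rlt_le _ _ Hvu)).
    rewrite Rabs_left1 in Hv |- * by lra. lra.
Qed.

Lemma is_derive_ode_flow u : is_derive ode_flow u (r (ode_flow u)).
Proof.
  apply is_derive_Reals.
  assert (Prf : forall a, ode_flow (u - 1) <= a <= ode_flow (u + 1) -> derivable_pt ode_time a).
  { intros a _. apply ex_derive_Reals_0. eexists. apply is_derive_ode_time. }
  assert (Hmon : ode_flow (u - 1) <= ode_flow u <= ode_flow (u + 1)).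
  { pose proof (ode_flow_lipschitz (u - 1) u ltac:(lra)).
    pose proof (ode_flow_lipschitz u (u + 1) ltac:(lra)). lra. }
  assert (Hd : derive_pt ode_time (ode_flow u) (Prf _ Hmon) = / r (ode_flow u)).
  { apply derive_pt_eq_0, is_derive_Reals, is_derive_ode_time. }
  pose proof (r_pos (ode_flow u)).
  replace (r (ode_flow u)) with (1 / derive_pt ode_time (ode_flow u) (Prf _ Hmon))
    by (rewrite Hd; field; lra).
  apply (Ranalysis5.derivable_pt_lim_recip_interv ode_time ode_flow (u - 1) (u + 1) u Prf);
    auto using continuity_pt_ode_flow; try lra.
  - intros x _. apply ode_time_flow.
  - rewrite Hd. apply Rgt_not_eq, Rinv_0_lt_compat; lra.
Qed.

Lemma ode_flow_0 : ode_flow 0 = 0.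
Proof. rewrite <- ode_time_0 at 1. apply ode_flow_time. Qed.

(* [ode_time (p u) - u] has zero derivative. *)
Lemma ode_time_solution (p : R -> R) u :
  p 0 = 0 -> (forall t, is_derive p t (r (p t))) -> ode_time (p u) = u.
Proof.
  intros H0 Hp.
  set (h := fun t => ode_time (p t) - t).
  assert (Hh : forall t, is_derive h t 0).
  { intros t. pose proof (r_pos (p t)).
    pose proof (is_derive_minus _ _ t _ _
      (is_derive_comp ode_time p t _ _ (is_derive_ode_time (p t)) (Hp t)) (is_derive_id t)) as D.
    match type of D with is_derive _ _ ?l => replace 0 with l end.
    - exact D.
    - unfold minus, plus, opp, scal, one; simpl. unfold mult; simpl. field. lra. }
  assert (h0 : h 0 = 0) by (unfold h; rewrite H0, ode_time_0; ring).
  enough (h u = 0) by (unfold h in *; lra).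
  destruct (Rtotal_order u 0) as [Hu|[Hu|Hu]].
  - rewrite <- h0. apply (eq_is_derive h u 0); [intros; apply Hh | lra].
  - now rewrite Hu.
  - rewrite <- h0. symmetry. apply (eq_is_derive h 0 u); [intros; apply Hh | lra].
Qed.

Lemma RInt_ode_time_change (f : R -> R) b : (forall u, continuous f u) ->
  RInt f 0 (ode_time b) = RInt (fun y => / r y * f (ode_time y)) 0 b.
Proof.
  intros Hf. rewrite <- ode_time_0 at 1.
  symmetry. apply (RInt_comp f ode_time (fun y => / r y)); auto.
  intros x _. split; [apply is_derive_ode_time | apply continuous_inv_r].
Qed.

End Autonomous_ODE.

Definition radicand c k B := c^2 + 2*k*B - (1 - k^2) / c^2 * B^2.

Definition H_density c k B :=
  ((1 - k^2) / c^2 * B + c^2 / B) / sqrt (radicand c k B) - c / B.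

Definition H_density_slope c k k0 B :=
  (k + k0) * B / (c^2 * sqrt (radicand c k B)) +
  ((1 - k0^2) / c^2 * B + c^2 / B) * (2*B + (k + k0) * B^2 / c^2) /
    (sqrt (radicand c k B) * sqrt (radicand c k0 B) *
     (sqrt (radicand c k B) + sqrt (radicand c k0 B))).

Section Density.

Variable c : R.
Hypothesis c_pos : 0 < c.

Lemma radicand_factor k B :
  c^2 * radicand c k B = (c^2 + (1 + k) * B) * (c^2 - (1 - k) * B).
Proof. unfold radicand. field. lra. Qed.

Lemma radicand_sub k k0 B :
  radicand c k B - radicand c k0 B = (k - k0) * (2*B + (k + k0) * B^2 / c^2).
Proof. unfold radicand. field. lra. Qed.

Lemma radicand_ge l1 k B : -1 <= k <= 1 -> 0 <= B <= l1^2 ->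
  0 <= c^2 - (1 - k) * l1^2 -> c^2 - (1 - k) * l1^2 <= radicand c k B.
Proof.
  intros Hk HB Hq. pose proof (radicand_factor k B) as E.
  assert (Hc2 : 0 < c^2) by nra.
  assert (c^2 - (1 - k) * l1^2 <= c^2 - (1 - k) * B) by nra.
  assert (0 <= (1 + k) * B * (c^2 - (1 - k) * B)) by (apply Rmult_le_pos; nra).
  apply (Rmult_le_reg_l (c^2)); [lra|]. rewrite E. nra.
Qed.

Lemma radicand_le k B : -1 <= k <= 1 -> 0 <= B -> radicand c k B <= c^2 + 2*B.
Proof.
  intros Hk HB. unfold radicand.
  enough (0 <= (1 - k^2) / c^2 * B^2) by nra.
  apply Rmult_le_pos; [apply Rdiv_le_0_compat|]; nra.
Qed.

Lemma H_density_sub k k0 B : 0 < B -> 0 < radicand c k B -> 0 < radicand c k0 B ->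
  H_density c k B - H_density c k0 B = - (k - k0) * H_density_slope c k k0 B.
Proof.
  intros HB HQ HQ0. unfold H_density, H_density_slope.
  pose proof (radicand_sub k k0 B) as EQ.
  pose proof (sqrt_lt_R0 _ HQ). pose proof (sqrt_lt_R0 _ HQ0).
  rewrite <- (sqrt_sqrt _ (Rlt_le _ _ HQ)), <- (sqrt_sqrt _ (Rlt_le _ _ HQ0)) in EQ.
  set (s := sqrt (radicand c k B)) in *. set (s0 := sqrt (radicand c k0 B)) in *.
  assert (Es : s - s0 = (k - k0) * (2*B + (k + k0) * B^2 / c^2) / (s + s0)).
  { rewrite <- EQ. field. lra. }
  set (P0 := (1 - k0^2) / c^2 * B + c^2 / B).
  transitivity (((1 - k^2) / c^2 * B + c^2 / B - P0) / s - P0 * (s - s0) / (s * s0)).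
  { field. repeat split; lra. }
  rewrite Es. unfold P0. field. repeat split; lra.
Qed.

Lemma H_density_slope_pos k k0 B : 0 <= k -> 0 <= k0 <= 1 -> 0 < B ->
  0 < radicand c k B -> 0 < radicand c k0 B -> 0 < H_density_slope c k k0 B.
Proof.
  intros Hk Hk0 HB HQ HQ0. unfold H_density_slope.
  pose proof (sqrt_lt_R0 _ HQ). pose proof (sqrt_lt_R0 _ HQ0).
  set (s := sqrt (radicand c k B)) in *. set (s0 := sqrt (radicand c k0 B)) in *.
  assert (0 <= (1 - k0^2) / c^2 * B) by (apply Rmult_le_pos; [apply Rdiv_le_0_compat|]; nra).
  assert (0 < c^2 / B) by (apply Rdiv_lt_0_compat; nra).
  assert (0 <= (k + k0) * B^2 / c^2) by (apply Rdiv_le_0_compat; nra).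
  apply Rplus_le_lt_0_compat.
  - apply Rdiv_le_0_compat; [nra | apply Rmult_lt_0_compat; nra].
  - apply Rdiv_lt_0_compat; repeat apply Rmult_lt_0_compat; lra.
Qed.

Lemma H_density_lt k k0 B : 0 <= k0 -> k0 < k <= 1 -> 0 < B -> 0 < radicand c k0 B ->
  H_density c k B < H_density c k0 B.
Proof.
  intros Hk0 Hk HB HQ0.
  assert (HQ : 0 < radicand c k B).
  { enough (0 <= radicand c k B - radicand c k0 B) by lra.
    rewrite radicand_sub. apply Rmult_le_pos; [lra|].
    assert (0 <= (k + k0) * B^2 / c^2) by (apply Rdiv_le_0_compat; nra). lra. }
  pose proof (H_density_sub k k0 B HB HQ HQ0).
  pose proof (H_density_slope_pos k k0 B ltac:(lra) ltac:(lra) HB HQ HQ0). nra.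
Qed.

Lemma H_density_slope_le l1 l2 m k k0 B : 0 < l2 -> 0 < m ->
  0 <= k <= 1 -> 0 <= k0 <= 1 -> l2^2 <= B <= l1^2 ->
  m <= radicand c k B -> m <= radicand c k0 B ->
  H_density_slope c k k0 B <=
  2 * l1^2 / (c^2 * sqrt m) +
  (l1^2 / c^2 + c^2 / l2^2) * (2 * l1^2 + 2 * l1^4 / c^2) / (m * (2 * sqrt m)).
Proof.
  intros Hl2 Hm Hk Hk0 HB HQ HQ0. unfold H_density_slope.
  assert (Hl2B : 0 < l2^2) by nra.
  assert (Hsm : 0 < sqrt m) by (apply sqrt_lt_R0; lra).
  assert (Hs : sqrt m <= sqrt (radicand c k B)) by (apply sqrt_le_1_alt; lra).
  assert (Hs0 : sqrt m <= sqrt (radicand c k0 B)) by (apply sqrt_le_1_alt; lra).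
  assert (Hss0 : m <= sqrt (radicand c k B) * sqrt (radicand c k0 B)).
  { rewrite <- (sqrt_sqrt m) by lra. apply Rmult_le_compat; lra. }
  set (s := sqrt (radicand c k B)) in *. set (s0 := sqrt (radicand c k0 B)) in *.
  assert (0 <= 1 - k0^2 <= 1) by nra.
  assert (HP : 0 <= (1 - k0^2) / c^2 * B + c^2 / B <= l1^2 / c^2 + c^2 / l2^2).
  { assert (0 <= (1 - k0^2) * B / c^2 <= l1^2 / c^2)
      by (split; [apply Rdiv_le_0_compat | apply Rdiv_le_compat]; nra).
    assert (0 <= c^2 / B <= c^2 / l2^2)
      by (split; [apply Rdiv_le_0_compat | apply Rdiv_le_compat]; nra).
    replace ((1 - k0^2) / c^2 * B) with ((1 - k0^2) * B / c^2) by (field; lra). lra. }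
  assert (HN : 0 <= 2*B + (k + k0) * B^2 / c^2 <= 2 * l1^2 + 2 * l1^4 / c^2).
  { assert (0 <= (k + k0) * B^2 / c^2 <= 2 * l1^4 / c^2)
      by (split; [apply Rdiv_le_0_compat | apply Rdiv_le_compat]; nra).
    lra. }
  apply Rplus_le_compat.
  - apply Rdiv_le_compat; [nra | nra | apply Rmult_lt_0_compat | apply Rmult_le_compat_l]; nra.
  - apply Rdiv_le_compat; [nra | apply Rmult_le_compat | nra | apply Rmult_le_compat]; lra.
Qed.

Lemma H_density_lipschitz l1 l2 m : 0 < l2 -> 0 < m -> exists L, forall k k0 B,
  0 <= k <= 1 -> 0 <= k0 <= 1 -> l2^2 <= B <= l1^2 ->
  m <= radicand c k B -> m <= radicand c k0 B ->
  Rabs (H_density c k B - H_density c k0 B) <= L * Rabs (k - k0).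
Proof.
  intros Hl2 Hm. eexists. intros k k0 B Hk Hk0 HB HQ HQ0.
  assert (0 < B) by nra.
  rewrite H_density_sub by lra.
  rewrite Rabs_mult, Rabs_Ropp, (Rabs_right (H_density_slope _ _ _ _)), Rmult_comm.
  - apply Rmult_le_compat_r; [apply Rabs_pos|].
    apply (H_density_slope_le l1 l2 m); auto.
  - apply Rle_ge, Rlt_le, H_density_slope_pos; lra.
Qed.

Lemma H_density_eq k B : 0 < B -> 0 < radicand c k B ->
  H_density c k B =
  ((1 - k^2) / c^2 * B^2 + c^2 - sqrt (c^2 * radicand c k B)) / (B * sqrt (radicand c k B)).
Proof.
  intros HB HQ. pose proof (sqrt_lt_R0 _ HQ).
  rewrite sqrt_mult_alt, sqrt_pow2 by nra. unfold H_density. field. lra.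
Qed.

Lemma radicand_gap k B :
  c^2 * radicand c k B - ((1 - k^2) / c^2 * B^2 + c^2)^2 =
  B * (2*k*c^2 - 3*(1 - k^2)*B - (1 - k^2)^2 / c^4 * B^3).
Proof. unfold radicand. field. lra. Qed.

Lemma H_density_nonpos k B : 0 < B -> 0 < radicand c k B -> -1 <= k <= 1 ->
  (1 - k^2)^2 / c^4 * B^3 + 3*(1 - k^2)*B <= 2*k*c^2 -> H_density c k B <= 0.
Proof.
  intros HB HQ Hk H. pose proof (radicand_gap k B). pose proof (sqrt_lt_R0 _ HQ).
  assert (0 <= (1 - k^2) / c^2 * B^2) by (apply Rmult_le_pos; [apply Rdiv_le_0_compat|]; nra).
  assert ((1 - k^2) / c^2 * B^2 + c^2 <= sqrt (c^2 * radicand c k B))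
    by (apply sqrt_le_of_sq_le; nra).
  rewrite H_density_eq by auto. apply Rmult_le_0_r; [lra|].
  apply Rlt_le, Rinv_0_lt_compat, Rmult_lt_0_compat; lra.
Qed.

Lemma H_density_nonneg k B : 0 < B -> 0 < radicand c k B -> -1 <= k <= 1 ->
  2*k*c^2 <= (1 - k^2)^2 / c^4 * B^3 + 3*(1 - k^2)*B -> 0 <= H_density c k B.
Proof.
  intros HB HQ Hk H. pose proof (radicand_gap k B). pose proof (sqrt_lt_R0 _ HQ).
  assert (0 <= (1 - k^2) / c^2 * B^2) by (apply Rmult_le_pos; [apply Rdiv_le_0_compat|]; nra).
  assert (sqrt (c^2 * radicand c k B) <= (1 - k^2) / c^2 * B^2 + c^2)
    by (apply sqrt_ge_of_le_sq; nra).
  rewrite H_density_eq by auto. apply Rdiv_le_0_compat; [lra|].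
  apply Rmult_lt_0_compat; lra.
Qed.

Lemma ex_derive_H_density k B : 0 < B -> 0 < radicand c k B -> ex_derive (H_density c k) B.
Proof.
  intros HB HQ. pose proof (sqrt_lt_R0 _ HQ).
  unfold H_density. auto_derive; repeat split; try lra. unfold radicand. auto_derive. lra.
Qed.

End Density.

Lemma Bang_sub l1 l2 x : l1^2 - Bang l1 l2 x = (l1^2 - l2^2) * sin x ^ 2.
Proof. unfold Bang. pose proof (sin_sq_add_cos_sq x). nra. Qed.

Lemma continuous_Bang l1 l2 x : continuous (Bang l1 l2) x.
Proof. apply continuous_of_ex_derive. unfold Bang. auto_derive. exact I. Qed.

Definition admissible l1 c k := 0 < k < 1 /\ (1 - k) * l1^2 < c^2.

Lemma admissible_between l1 c k0 k1 k : admissible l1 c k0 -> admissible l1 c k1 ->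
  k0 <= k <= k1 -> admissible l1 c k.
Proof. intros [Hk0 Hq0] [Hk1 Hq1] Hk. split; [lra | nra]. Qed.

Definition H_reduced l1 l2 c k := RInt (fun x => H_density c k (Bang l1 l2 x)) 0 PI.

Section Reduced.

Variables l1 l2 c : R.
Hypothesis c_pos : 0 < c.
Hypothesis l2_pos : 0 < l2.
Hypothesis l2_le_l1 : l2 <= l1.

Lemma Bang_bounds x : l2^2 <= Bang l1 l2 x <= l1^2.
Proof.
  pose proof (Bang_sub l1 l2 x). pose proof (sin_sq_add_cos_sq x).
  assert (0 <= sin x ^ 2 <= 1) by nra. assert (l2^2 <= l1^2) by nra. nra.
Qed.

Lemma radicand_Bang_ge k x : 0 <= k <= 1 -> 0 <= c^2 - (1 - k) * l1^2 ->
  c^2 - (1 - k) * l1^2 <= radicand c k (Bang l1 l2 x).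
Proof. intros. pose proof (Bang_bounds x). apply radicand_ge; auto; try lra; nra. Qed.

Lemma continuous_H_density_Bang k x : 0 <= k <= 1 -> 0 < c^2 - (1 - k) * l1^2 ->
  continuous (fun x => H_density c k (Bang l1 l2 x)) x.
Proof.
  intros Hk Hq. pose proof (Bang_bounds x). pose proof (radicand_Bang_ge k x Hk).
  apply (continuous_comp (Bang l1 l2) (H_density c k)); [apply continuous_Bang|].
  apply continuous_of_ex_derive, ex_derive_H_density; auto; nra.
Qed.

Lemma ex_RInt_H_density_Bang k a b : 0 <= k <= 1 -> 0 < c^2 - (1 - k) * l1^2 ->
  ex_RInt (fun x => H_density c k (Bang l1 l2 x)) a b.
Proof. intros. apply ex_RInt_of_continuous. intros; apply continuous_H_density_Bang; auto. Qed.

Lemma H_reduced_lt k0 k : admissible l1 c k0 -> admissible l1 c k -> k0 < k ->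
  H_reduced l1 l2 c k < H_reduced l1 l2 c k0.
Proof.
  intros [Hk0 Hq0] [Hk Hq] Hlt. unfold H_reduced.
  apply RInt_lt; [apply PI_RGT_0 | | |].
  - intros x _. apply continuous_H_density_Bang; lra.
  - intros x _. apply continuous_H_density_Bang; lra.
  - intros x _. pose proof (Bang_bounds x). pose proof (radicand_Bang_ge k0 x).
    apply H_density_lt; try lra; nra.
Qed.

Lemma H_reduced_inj k k' : admissible l1 c k -> admissible l1 c k' ->
  H_reduced l1 l2 c k = H_reduced l1 l2 c k' -> k = k'.
Proof.
  intros Hk Hk' E. destruct (Rtotal_order k k') as [Hlt|[Heq|Hgt]]; auto.
  - pose proof (H_reduced_lt k k' Hk Hk' Hlt). lra.
  - pose proof (H_reduced_lt k' k Hk' Hk Hgt). lra.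
Qed.

Lemma H_reduced_lipschitz m : 0 < m -> exists L, forall k k0,
  0 <= k <= 1 -> 0 <= k0 <= 1 ->
  m <= c^2 - (1 - k) * l1^2 -> m <= c^2 - (1 - k0) * l1^2 ->
  Rabs (H_reduced l1 l2 c k - H_reduced l1 l2 c k0) <= PI * L * Rabs (k - k0).
Proof.
  intros Hm. destruct (H_density_lipschitz c c_pos l1 l2 m l2_pos Hm) as [L HL].
  exists L. intros k k0 Hk Hk0 Hq Hq0. unfold H_reduced.
  pose proof (ex_RInt_H_density_Bang k 0 PI Hk ltac:(lra)) as Ek.
  pose proof (ex_RInt_H_density_Bang k0 0 PI Hk0 ltac:(lra)) as Ek0.
  pose proof (RInt_minus _ _ _ _ Ek Ek0) as E. change minus with Rminus in E. rewrite <- E.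
  replace (PI * L * Rabs (k - k0)) with ((PI - 0) * (L * Rabs (k - k0))) by ring.
  apply abs_RInt_le_const; [pose proof PI_RGT_0; lra | exact (ex_RInt_minus _ _ _ _ Ek Ek0) |].
  intros x _. pose proof (Bang_bounds x).
  pose proof (radicand_Bang_ge k x Hk ltac:(lra)). pose proof (radicand_Bang_ge k0 x Hk0 ltac:(lra)).
  apply HL; auto; lra.
Qed.

Lemma continuity_pt_H_reduced k0 : admissible l1 c k0 -> continuity_pt (H_reduced l1 l2 c) k0.
Proof.
  intros [Hk0 Hq0].
  set (q0 := c^2 - (1 - k0) * l1^2).
  assert (Hl1 : 0 < l1^2) by nra.
  destruct (H_reduced_lipschitz (q0 / 2) ltac:(unfold q0; lra)) as [L HL].
  set (d := Rmin (Rmin k0 (1 - k0)) (q0 / (2 * l1^2))).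
  assert (Hd1 : d <= k0) by (eapply Rle_trans; [apply Rmin_l | apply Rmin_l]).
  assert (Hd2 : d <= 1 - k0) by (eapply Rle_trans; [apply Rmin_l | apply Rmin_r]).
  assert (Hd3 : d * l1^2 <= q0 / 2).
  { replace (q0 / 2) with (q0 / (2 * l1^2) * l1^2) by (field; lra).
    apply Rmult_le_compat_r; [lra | apply Rmin_r]. }
  apply (continuity_pt_of_lipschitz _ _ d (PI * L)).
  { unfold d. repeat apply Rmin_pos; try lra. apply Rdiv_lt_0_compat; unfold q0; lra. }
  intros k Hk. apply Rabs_def2 in Hk.
  apply HL; unfold q0 in *; try lra; nra.
Qed.

Lemma H_density_nonpos_near_one eta B : 0 < eta <= 1/2 -> 0 < B <= l1^2 ->
  eta * l1^2 <= c^2 / 12 -> eta * l1^3 <= c^3 / 4 -> H_density c (1 - eta) B <= 0.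
Proof.
  intros He HB He2 He3. assert (Hl1 : 0 < l1) by lra.
  assert (HQ : 0 < radicand c (1 - eta) B).
  { eapply Rlt_le_trans; [|apply (radicand_ge c c_pos l1)]; nra. }
  apply H_density_nonpos; [lra | lra | exact HQ | lra |].
  set (t := 1 - (1 - eta)^2).
  assert (Ht : 0 <= t <= 2 * eta) by (unfold t; nra).
  assert (HB3 : B^3 <= l1^6) by (replace (l1^6) with ((l1^2)^3) by ring; apply pow_incr; lra).
  assert (T1 : t^2 / c^4 * B^3 <= c^2 / 4).
  { assert (t^2 * B^3 <= (2 * eta)^2 * l1^6)
      by (apply Rmult_le_compat; try apply pow_incr; try apply pow_le; lra).
    assert ((eta * l1^3)^2 <= (c^3 / 4)^2)
      by (apply pow_incr; split; [apply Rmult_le_pos; [|apply pow_le]|]; lra).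
    apply (Rmult_le_reg_r (c^4)); [apply pow_lt; lra|].
    replace (t^2 / c^4 * B^3 * c^4) with (t^2 * B^3) by (field; lra). nra. }
  assert (T2 : 3 * t * B <= c^2 / 2) by nra.
  nra.
Qed.

Lemma H_reduced_nonpos_near_one : exists k, admissible l1 c k /\ H_reduced l1 l2 c k <= 0.
Proof.
  assert (Hl1 : 0 < l1) by lra.
  set (eta := Rmin (1/2) (Rmin (c^2 / (12 * l1^2)) (c^3 / (4 * l1^3)))).
  assert (He : 0 < eta).
  { assert (0 < l1^2) by (apply pow_lt; lra). assert (0 < l1^3) by (apply pow_lt; lra).
    unfold eta. repeat apply Rmin_pos; try lra; apply Rdiv_lt_0_compat; try nra.
    apply pow_lt; lra. }
  assert (He1 : eta <= 1/2) by apply Rmin_l.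
  assert (He2 : eta * l1^2 <= c^2 / 12).
  { replace (c^2 / 12) with (c^2 / (12 * l1^2) * l1^2) by (field; lra).
    apply Rmult_le_compat_r; [nra|]. eapply Rle_trans; [apply Rmin_r | apply Rmin_l]. }
  assert (He3 : eta * l1^3 <= c^3 / 4).
  { replace (c^3 / 4) with (c^3 / (4 * l1^3) * l1^3) by (field; lra).
    apply Rmult_le_compat_r; [apply pow_le; lra|]. eapply Rle_trans; [apply Rmin_r | apply Rmin_r]. }
  exists (1 - eta). split; [split; nra|].
  unfold H_reduced. apply RInt_le_0; [pose proof PI_RGT_0; lra | apply ex_RInt_H_density_Bang; nra |].
  intros x _. pose proof (Bang_bounds x). apply H_density_nonpos_near_one; auto; nra.
Qed.

Lemma H_density_nonneg_small k B : 0 < k <= 1/2 -> k * c^2 <= l2^2 -> l2^2 <= B ->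
  0 < radicand c k B -> 0 <= H_density c k B.
Proof.
  intros Hk Hkc HB HQ. apply H_density_nonneg; auto; try nra; try lra.
  assert (0 <= (1 - k^2)^2 / c^4 * B^3)
    by (apply Rmult_le_pos; [apply Rdiv_le_0_compat; [|apply pow_lt]|apply pow_le]; nra).
  assert (3/4 <= 1 - k^2) by nra. nra.
Qed.

Lemma H_reduced_nonneg_large_c : l1 < c -> exists k, admissible l1 c k /\ 0 <= H_reduced l1 l2 c k.
Proof.
  intros Hlc.
  set (k := Rmin (1/2) (l2^2 / c^2)).
  assert (Hk : 0 < k <= 1/2).
  { split; [apply Rmin_pos; [lra | apply Rdiv_lt_0_compat; nra] | apply Rmin_l]. }
  assert (Hkc : k * c^2 <= l2^2).
  { pose proof (Rmin_r (1/2) (l2^2 / c^2)) as H. fold k in H.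
    apply (Rmult_le_compat_r (c^2)) in H; [|nra].
    replace (l2^2 / c^2 * c^2) with (l2^2) in H by (field; lra). exact H. }
  exists k. split; [split; nra|].
  unfold H_reduced. apply RInt_ge_0; [pose proof PI_RGT_0; lra | apply ex_RInt_H_density_Bang; nra |].
  intros x _. pose proof (Bang_bounds x). pose proof (radicand_Bang_ge k x).
  apply H_density_nonneg_small; auto; try lra; nra.
Qed.

Section Hyperbola.

Variables a k : R.
Hypothesis a_pos : 0 < a.
Hypothesis k_bounds : 0 < k < 1.
Hypothesis k_def : (1 - k) * l1^2 = c^2 - a^2.

Let M := (c^2 + 2 * l1^2) * (1 + l1^2) / c^2.

(* Near [x = 0] the radicand is as small as [a^2]: [c^2 - (1 - k) B = a^2 + (1 - k) (l1^2 - B)]. *)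
Lemma radicand_Bang_le_sq x : 0 <= x <= PI ->
  0 < radicand c k (Bang l1 l2 x) <= M * (a + x)^2.
Proof.
  intros Hx. pose proof (Bang_bounds x) as HB. pose proof (Bang_sub l1 l2 x) as Hsub.
  pose proof (sin_sq_le_sq x Hx). assert (0 <= sin x ^ 2) by nra.
  set (B := Bang l1 l2 x) in *.
  assert (E : c^2 - (1 - k) * B = a^2 + (1 - k) * (l1^2 - B)) by nra.
  assert (Hlow : 0 < c^2 - (1 - k) * B) by nra.
  assert (Hup : c^2 - (1 - k) * B <= (1 + l1^2) * (a + x)^2).
  { rewrite E, Hsub. assert (0 <= l1^2 - l2^2 <= l1^2) by nra.
    assert (0 <= (l1^2 - l2^2) * sin x ^ 2 <= l1^2 * x^2) by (split; nra).
    assert (a^2 + x^2 <= (a + x)^2) by nra. nra. }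
  pose proof (radicand_factor c c_pos k B) as F.
  split; [nra|].
  apply (Rmult_le_reg_l (c^2)); [nra|].
  replace (c^2 * (M * (a + x)^2)) with ((c^2 + 2 * l1^2) * ((1 + l1^2) * (a + x)^2))
    by (unfold M; field; lra).
  rewrite F. apply Rmult_le_compat; nra.
Qed.

Lemma H_density_ge_hyperbola x : 0 <= x <= PI ->
  c^2 / (l1^2 * sqrt M) / (a + x) - c / l2^2 <= H_density c k (Bang l1 l2 x).
Proof.
  intros Hx. pose proof (Bang_bounds x) as HB. pose proof (radicand_Bang_le_sq x Hx) as HQ.
  set (B := Bang l1 l2 x) in *.
  assert (HM : 0 < M) by (unfold M; apply Rdiv_lt_0_compat; nra).
  assert (Hs : sqrt (radicand c k B) <= sqrt M * (a + x)).
  { rewrite <- (sqrt_pow2 (a + x)), <- sqrt_mult by nra. apply sqrt_le_1_alt. lra. }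
  pose proof (sqrt_lt_R0 _ (proj1 HQ)). pose proof (sqrt_lt_R0 _ HM).
  unfold H_density.
  assert (c^2 / l1^2 <= (1 - k^2) / c^2 * B + c^2 / B).
  { assert (0 <= (1 - k^2) / c^2 * B) by (apply Rmult_le_pos; [apply Rdiv_le_0_compat|]; nra).
    assert (c^2 / l1^2 <= c^2 / B) by (apply Rdiv_le_compat; nra). lra. }
  assert (c / B <= c / l2^2) by (apply Rdiv_le_compat; nra).
  replace (c^2 / (l1^2 * sqrt M) / (a + x)) with (c^2 / l1^2 / (sqrt M * (a + x)))
    by (field; repeat split; nra).
  enough (c^2 / l1^2 / (sqrt M * (a + x)) <= ((1 - k^2) / c^2 * B + c^2 / B) / sqrt (radicand c k B))
    by lra.
  apply Rdiv_le_compat; try lra. apply Rdiv_le_0_compat; nra.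
Qed.

End Hyperbola.

(* For [c <= l1] the lower end of the admissible range is [k = 1 - c^2 / l1^2], where the
   radicand vanishes at [x = 0]; there [H_reduced] diverges like [- ln a]. *)
Lemma H_reduced_nonneg_small_c : c <= l1 -> exists k, admissible l1 c k /\ 0 <= H_reduced l1 l2 c k.
Proof.
  intros Hcl. pose proof PI_RGT_0.
  set (C := c^2 / (l1^2 * sqrt ((c^2 + 2 * l1^2) * (1 + l1^2) / c^2))).
  set (D := c / l2^2).
  assert (HC : 0 < C).
  { apply Rdiv_lt_0_compat; [nra | apply Rmult_lt_0_compat; [nra | apply sqrt_lt_R0]].
    apply Rdiv_lt_0_compat; nra. }
  destruct (RInt_hyperbola_nonneg C D (c / 2) HC ltac:(lra)) as [a [[Ha Ha1] Hint]].
  set (k := 1 - (c^2 - a^2) / l1^2).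
  assert (Hkdef : (1 - k) * l1^2 = c^2 - a^2) by (unfold k; field; nra).
  assert (Hk : 0 < k < 1).
  { assert (c^2 <= l1^2) by nra. assert (a^2 <= c^2 / 4) by nra.
    assert (0 < a^2) by nra. assert (0 < l1^2) by nra.
    split; apply (Rmult_lt_reg_r (l1^2)); nra. }
  exists k. split; [split; [exact Hk | rewrite Hkdef; nra]|].
  apply Rle_trans with (RInt (fun x => C / (a + x) - D) 0 PI); [exact Hint|].
  unfold H_reduced. apply RInt_le; [lra | | apply ex_RInt_H_density_Bang; nra |].
  - apply (@ex_RInt_continuous R_CompleteNormedModule). intros x Hx.
    rewrite Rmin_left, Rmax_right in Hx by lra.
    apply continuous_of_ex_derive. auto_derive. lra.
  - intros x Hx. apply (H_density_ge_hyperbola a k); auto; lra.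
Qed.

Lemma H_reduced_has_zero : exists k, admissible l1 c k /\ H_reduced l1 l2 c k = 0.
Proof.
  destruct H_reduced_nonpos_near_one as [k1 [Hk1 H1]].
  assert (exists k0, admissible l1 c k0 /\ 0 <= H_reduced l1 l2 c k0) as [k0 [Hk0 H0]].
  { destruct (Rlt_le_dec l1 c).
    - apply H_reduced_nonneg_large_c; auto.
    - apply H_reduced_nonneg_small_c; auto. }
  assert (Hle : k0 <= k1).
  { destruct (Rle_lt_dec k0 k1) as [|Hlt]; auto.
    pose proof (H_reduced_lt k1 k0 Hk1 Hk0 Hlt). lra. }
  destruct (IVT_interv_nonneg_nonpos (H_reduced l1 l2 c) k0 k1) as [k [Hk Hz]]; auto.
  - intros k Hk. apply continuity_pt_H_reduced, (admissible_between l1 c k0 k1); auto.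
  - exists k. split; auto. apply (admissible_between l1 c k0 k1); auto.
Qed.

End Reduced.

Lemma phi_rhs_eq l1 l2 c th x : 0 < c ->
  phi_rhs l1 l2 c th x = sqrt (radicand c (cos th) (Bang l1 l2 x)).
Proof.
  intros Hc. unfold phi_rhs, radicand, Dc.
  replace ((sin th / c)^2) with ((1 - cos th ^ 2) / c^2); [reflexivity|].
  rewrite <- (sin_sq_add_cos_sq th). field. lra.
Qed.

Section Reduction.

Variables l1 l2 c th : R.
Hypothesis c_pos : 0 < c.
Hypothesis l2_pos : 0 < l2.
Hypothesis l2_le_l1 : l2 <= l1.
Hypothesis cos_admissible : admissible l1 c (cos th).

Let r := phi_rhs l1 l2 c th.
Let rmax := sqrt (c^2 + 2 * l1^2).

Lemma radicand_rhs_bounds x :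
  c^2 - (1 - cos th) * l1^2 <= radicand c (cos th) (Bang l1 l2 x) <= c^2 + 2 * l1^2.
Proof.
  destruct cos_admissible as [Hk Hq]. pose proof (Bang_bounds l1 l2 l2_pos l2_le_l1 x).
  split; [apply radicand_Bang_ge; auto; lra|].
  eapply Rle_trans; [apply radicand_le; auto; nra | lra].
Qed.

Lemma phi_rhs_pos x : 0 < r x.
Proof.
  unfold r. rewrite phi_rhs_eq by auto. apply sqrt_lt_R0.
  pose proof (radicand_rhs_bounds x). destruct cos_admissible. lra.
Qed.

Lemma phi_rhs_le x : r x <= rmax.
Proof.
  unfold r, rmax. rewrite phi_rhs_eq by auto. apply sqrt_le_1_alt, radicand_rhs_bounds.
Qed.

Lemma continuous_phi_rhs x : continuous r x.
Proof.
  apply (continuous_ext (fun x => sqrt (radicand c (cos th) (Bang l1 l2 x)))).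
  { intros y. unfold r. rewrite phi_rhs_eq; auto. }
  apply (continuous_comp (fun x => radicand c (cos th) (Bang l1 l2 x)) sqrt).
  - apply (continuous_comp (Bang l1 l2) (radicand c (cos th))); [apply continuous_Bang|].
    apply continuous_of_ex_derive. unfold radicand. auto_derive. lra.
  - apply continuity_pt_filterlim, continuity_pt_sqrt.
    pose proof (radicand_rhs_bounds x). destruct cos_admissible. lra.
Qed.

#[local] Hint Resolve continuous_phi_rhs phi_rhs_pos phi_rhs_le : core.

Lemma phi_solves : is_phi l1 l2 c th (phi l1 l2 c th).
Proof.
  unfold phi. apply epsilon_spec. exists (ode_flow r).
  split; [apply (ode_flow_0 r rmax) | apply (is_derive_ode_flow r rmax)]; auto.
Qed.

Lemma ode_time_phi u : ode_time r (phi l1 l2 c th u) = u.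
Proof.
  destruct phi_solves as [H0 Hd].
  apply (ode_time_solution r); auto.
Qed.

Lemma phi_ode_time x : phi l1 l2 c th (ode_time r x) = x.
Proof.
  apply (ode_time_inj r rmax); auto.
  apply ode_time_phi.
Qed.

Lemma Ucap_eq : Ucap l1 l2 c th = ode_time r PI.
Proof.
  unfold Ucap.
  assert (Ex : exists U, 0 < U /\ phi l1 l2 c th U = PI).
  { exists (ode_time r PI). split; [|apply phi_ode_time].
    rewrite <- (ode_time_0 r).
    apply (ode_time_lt r rmax); auto. apply PI_RGT_0. }
  destruct (epsilon_spec (inhabits 0) _ Ex) as [_ HU].
  set (U := epsilon _ _) in HU |- *. rewrite <- (ode_time_phi U), HU. reflexivity.
Qed.

Lemma continuity_pt_phi u : continuity_pt (phi l1 l2 c th) u.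
Proof.
  apply continuity_pt_filterlim, continuous_of_ex_derive.
  destruct phi_solves as [_ Hd]. eexists; apply Hd.
Qed.

Lemma Bfun_pos u : 0 < Bfun l1 l2 c th u.
Proof. unfold Bfun. pose proof (Bang_bounds l1 l2 l2_pos l2_le_l1 (phi l1 l2 c th u)). nra. Qed.

Lemma continuity_pt_Bfun u : continuity_pt (Bfun l1 l2 c th) u.
Proof.
  apply (continuity_pt_comp (phi l1 l2 c th) (Bang l1 l2)); [apply continuity_pt_phi|].
  apply continuity_pt_filterlim, continuous_Bang.
Qed.

Lemma continuity_pt_ffun_integrand u :
  continuity_pt (fun s => Dc c th * Bfun l1 l2 c th s) u.
Proof.
  apply continuity_pt_mult; [apply continuity_pt_const; intros ? ?; reflexivity|].
  apply continuity_pt_Bfun.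
Qed.

Lemma continuity_pt_Gfun_integrand u :
  continuity_pt (fun s => (c - phi' l1 l2 c th s) / Bfun l1 l2 c th s) u.
Proof.
  apply continuity_pt_div; [| apply continuity_pt_Bfun | apply Rgt_not_eq, Bfun_pos].
  apply continuity_pt_minus; [apply continuity_pt_const; intros ? ?; reflexivity|].
  apply (continuity_pt_comp (phi l1 l2 c th) r); [apply continuity_pt_phi|].
  apply continuity_pt_filterlim, continuous_phi_rhs.
Qed.

Lemma Hfun_eq : Hfun l1 l2 c th = H_reduced l1 l2 c (cos th).
Proof.
  set (f := fun s => Dc c th * Bfun l1 l2 c th s).
  set (g := fun s => (c - phi' l1 l2 c th s) / Bfun l1 l2 c th s).
  assert (Hf : forall u, continuity_pt f u) by apply continuity_pt_ffun_integrand.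
  assert (Hg : forall u, continuity_pt g u) by apply continuity_pt_Gfun_integrand.
  unfold Hfun, ffun, Gfun. fold f g.
  rewrite RInt_lin_comb by (apply ex_RInt_of_continuous; intros; apply continuity_pt_filterlim; auto).
  rewrite Ucap_eq, (RInt_ode_time_change r); auto.
  2: { intros u. apply continuity_pt_filterlim, continuity_pt_plus;
       (apply continuity_pt_mult; [apply continuity_pt_const; intros ? ?; reflexivity | auto]). }
  unfold H_reduced. apply RInt_ext. intros y _.
  unfold f, g, Bfun, phi'. rewrite phi_ode_time. fold r.
  pose proof (phi_rhs_pos y). pose proof (Bang_bounds l1 l2 l2_pos l2_le_l1 y).
  unfold r in *. rewrite phi_rhs_eq in * by auto.
  unfold H_density, Dc. rewrite <- (sin_sq_add_cos_sq th).
  match goal with |- ?a = ?b => change (@eq R a b) end. field. split; nra.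
Qed.

End Reduction.

Lemma lt_acos_iff th y : 0 <= th <= PI -> -1 <= y <= 1 -> (th < acos y <-> y < cos th).
Proof.
  intros Hth Hy. pose proof (acos_bound y). pose proof (cos_acos y Hy) as E.
  split; intros Hlt.
  - rewrite <- E. apply cos_decreasing_1; lra.
  - apply cos_decreasing_0; lra.
Qed.

Lemma lt_theta_plus_iff l1 c th : 0 < c -> 0 < l1 -> 0 <= th < PI ->
  (th < theta_plus l1 c <-> (1 - cos th) * l1^2 < c^2).
Proof.
  intros Hc Hl1 Hth. pose proof (COS_bound th).
  assert (E2 : (sqrt 2 * l1)^2 = 2 * l1^2)
    by (rewrite Rpow_mult_distr, pow2_sqrt by lra; reflexivity).
  assert (0 < sqrt 2 * l1) by (apply Rmult_lt_0_compat; [apply sqrt_lt_R0|]; lra).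
  unfold theta_plus. destruct (Rlt_dec (sqrt 2 * l1) c) as [Hlt|Hge].
  - assert (2 * l1^2 < c^2) by nra. split; intros; [nra | lra].
  - assert (Hc2 : c^2 <= 2 * l1^2) by nra.
    assert (Hl2 : 0 < l1^2) by nra.
    assert (Hy : -1 <= 1 - c^2 / l1^2 <= 1).
    { split; [|enough (0 <= c^2 / l1^2) by lra; apply Rdiv_le_0_compat; nra].
      enough (c^2 / l1^2 <= 2) by lra.
      apply (Rmult_le_reg_r (l1^2)); [lra|]. unfold Rdiv. rewrite Rmult_assoc, Rinv_l; lra. }
    rewrite lt_acos_iff by lra.
    set (q := c^2 / l1^2) in *.
    assert (Eq : c^2 = q * l1^2) by (unfold q; field; lra).
    rewrite Eq. split; intros; nra.
Qed.

Lemma admissible_cos l1 c th : 0 < c -> 0 < l1 -> 0 < th < PI / 2 -> th < theta_plus l1 c ->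
  admissible l1 c (cos th).
Proof.
  intros Hc Hl1 Hth Htp. pose proof PI_RGT_0.
  split; [split|].
  - apply cos_gt_0; lra.
  - rewrite <- cos_0. apply cos_decreasing_1; lra.
  - apply lt_theta_plus_iff; auto; lra.
Qed.

Lemma acos_admissible l1 c k : 0 < c -> 0 < l1 -> admissible l1 c k ->
  0 < acos k < PI / 2 /\ acos k < theta_plus l1 c.
Proof.
  intros Hc Hl1 [Hk Hq]. pose proof PI_RGT_0.
  pose proof (acos_bound_lt k ltac:(lra)). pose proof (cos_acos k ltac:(lra)) as Ec.
  assert (acos k < PI / 2).
  { rewrite <- acos_0. apply lt_acos_iff; [lra | lra | rewrite Ec; lra]. }
  split; [lra|]. apply lt_theta_plus_iff; [auto | auto | lra | rewrite Ec; exact Hq].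
Qed.

Theorem lemma5p2 (l1 l2 : R)
  (hl : (l1 > l2 /\ l2 > 0) \/ (l1 = 1 /\ l2 = 1)) :
  forall c : R, 0 < c ->
  exists! th : R,
    (0 < th < PI / 2 /\ 0 < th < theta_plus l1 c) /\ Hfun l1 l2 c th = 0.
Proof.
  intros c Hc.
  assert (Hl2 : 0 < l2) by (destruct hl; lra).
  assert (Hl12 : l2 <= l1) by (destruct hl; lra).
  destruct (H_reduced_has_zero l1 l2 c Hc Hl2 Hl12) as [k [Hk Hz]].
  destruct (acos_admissible l1 c k) as [Hth Hthp]; auto; [lra|].
  exists (acos k). split.
  - split; [split; lra|].
    assert (Ec : cos (acos k) = k) by (apply cos_acos; destruct Hk; lra).
    rewrite Hfun_eq by (rewrite ?Ec; auto). rewrite Ec. exact Hz.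
  - intros th [[Hth' [_ Hthp']] Hz'].
    assert (Hadm : admissible l1 c (cos th)) by (apply admissible_cos; auto; lra).
    rewrite Hfun_eq in Hz' by auto.
    rewrite <- (H_reduced_inj l1 l2 c Hc Hl2 Hl12 (cos th) k Hadm Hk) by lra.
    pose proof PI_RGT_0. apply acos_cos. lra.
Qed.
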